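(* Let $h>0$ and $\mathcal{X}=(h,\infty)$. Let $\mathcal{L}:\mathcal{X}\to\mathbb{R}$ be real-analytic, bounded below and proper (coercive), with $\underline{\mathcal{L}}:=\inf_{k\in\mathcal{X}}\mathcal{L}(k)$, such that $\limsup_{k\to\infty}\mathcal{L}'(k)$ is finite and such that $\mathcal{L}$ satisfies a saturated Polyak–Łojasiewicz inequality: there exist $a,b>0$ with $$|\mathcal{L}'(k)|\ \ge\ \sqrt{\frac{a(\mathcal{L}(k)-\underline{\mathcal{L}})}{b+(\mathcal{L}(k)-\underline{\mathcal{L}})}}\qquad\text{for all }k\in\mathcal{X}.$$ Define $f(k):=\mathcal{L}(k^2)$ for $k>\sqrt{h}$, and $\underline{f}:=\inf_{k>\sqrt{h}}f(k)$ (so $\underline f=\underline{\mathcal{L}}$). Then for every $\epsilon>\sqrt{h}$ there exists $\mu_\epsilon>0$ such that $$|f'(k)|\ \ge\ \sqrt{\mu_\epsilon\,(f(k)-\underline{f})}\qquad\text{for all }k\in[\epsilon,\infty).$$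
   Context: ''Proper'' means coercive/radially unbounded on the open domain $\mathcal{X}$ (sublevel sets are compact in $\mathcal{X}$); since $\mathcal{L}$ is bounded below and proper, its infimum is attained. *)

From Stdlib Require Import Reals.
From Stdlib Require Import Rtopology.
From Coquelicot Require Import Coquelicot.
Open Scope R_scope.

Definition real_analytic_on_gt (h : R) (g : R -> R) : Prop :=
  forall x0, h < x0 ->
    exists (c : nat -> R) (r : R), 0 < r /\
      forall x, Rabs (x - x0) < r -> is_pseries c (x - x0) (g x).

Definition is_inf_on (P : R -> Prop) (g : R -> R) (m : R) : Prop :=
  (forall k, P k -> m <= g k) /\
  (forall e, 0 < e -> exists k, P k /\ g k < m + e).

(* Proper (coercive) on (h, +oo): every sublevel set {k > h | g k <= c}
   is compact (in R, equivalently in the open interval). *)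
Definition proper_on_gt (h : R) (g : R -> R) : Prop :=
  forall c, compact (fun k => h < k /\ g k <= c).

Definition limsup_pinfty_finite (g : R -> R) : Prop :=
  (exists M K, forall k, K < k -> g k <= M) /\
  (exists m, forall K, exists k, K < k /\ m <= g k).

(* A point k >= eps corresponds to x = k^2 >= eps^2, and f'(k) = 2 k L'(x).
   Since limsup L' < oo, L grows at most affinely on [eps^2, oo), so the
   saturating factor b + (L(x) - inf L) is at most C + N (x - eps^2).  The
   chain-rule factor (2 k)^2 = 4 x grows at the same rate, which turns the
   saturated inequality into a plain PL inequality with
   mu = 4 a eps^2 / (C + N eps^2). *)
From Stdlib Require Import Reals Lra.
From Coquelicot Require Import Coquelicot.
Open Scope R_scope.

Lemma ex_pseries_le_CV_radius (c : nat -> R) (x : R) :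
  ex_pseries c x -> Rbar_le (Rabs x) (CV_radius c).
Proof.
  intros Hx. apply Rbar_not_lt_le. intros Hlt.
  apply (CV_disk_outside c x Hlt).
  now apply ex_series_lim_0, ex_pseries_R.
Qed.

Lemma real_analytic_on_gt_ex_derive (h : R) (g : R -> R) :
  real_analytic_on_gt h g -> forall x, h < x -> ex_derive g x.
Proof.
  intros Hg x0 Hx0.
  destruct (Hg x0 Hx0) as (c & r & Hr & Hc).
  assert (Hradius : Rbar_lt (Rabs 0) (CV_radius c)).
  { assert (Hhalf : ex_pseries c (r / 2)).
    { pose proof (Hc (x0 + r / 2)) as Hsum.
      replace (x0 + r / 2 - x0) with (r / 2) in Hsum by ring.
      exists (g (x0 + r / 2)). apply Hsum. rewrite Rabs_pos_eq; lra. }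
    eapply Rbar_lt_le_trans; [|exact (ex_pseries_le_CV_radius c _ Hhalf)].
    rewrite Rabs_R0, Rabs_pos_eq; simpl; lra. }
  apply ex_derive_ext_loc with (f := fun t => PSeries c (t - x0)).
  - exists (mkposreal r Hr). intros t Ht.
    now apply is_pseries_unique, Hc.
  - apply (ex_derive_comp (PSeries c) (fun t => t - x0)).
    + replace (x0 - x0) with 0 by ring. now apply ex_derive_PSeries.
    + auto_derive. auto.
Qed.

Lemma pow2_gt_of_sqrt_lt (h k : R) : sqrt h < k -> h < k ^ 2.
Proof.
  intros Hk. destruct (Rle_or_lt h 0) as [Hh | Hh].
  - rewrite (sqrt_neg_0 h Hh) in Hk.
    assert (0 < k ^ 2) by (apply pow_lt; lra). lra.
  - pose proof (sqrt_pos h). pose proof (sqrt_sqrt h (Rlt_le _ _ Hh)). nra.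
Qed.

Lemma is_inf_on_unique (P : R -> Prop) (g : R -> R) (m m' : R) :
  is_inf_on P g m -> is_inf_on P g m' -> m = m'.
Proof.
  intros [Hlb Happ] [Hlb' Happ'].
  destruct (Rtotal_order m m') as [Hlt | [Heq | Hgt]]; [| exact Heq |].
  - destruct (Happ (m' - m)) as (k & Hk & Hgk); [lra|].
    specialize (Hlb' k Hk). lra.
  - destruct (Happ' (m - m')) as (k & Hk & Hgk); [lra|].
    specialize (Hlb k Hk). lra.
Qed.

Lemma is_inf_on_comp (P Q : R -> Prop) (phi g : R -> R) (m : R) :
  (forall x, P x -> Q (phi x)) ->
  (forall y, Q y -> exists x, P x /\ phi x = y) ->
  is_inf_on Q g m -> is_inf_on P (fun x => g (phi x)) m.
Proof.
  intros HPQ Hsurj [Hlb Happ]. split.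
  - intros x Hx. exact (Hlb _ (HPQ x Hx)).
  - intros e He. destruct (Happ e He) as (y & Hy & Hgy).
    destruct (Hsurj y Hy) as (x & Hx & <-). now exists x.
Qed.

Lemma is_inf_on_pow2 (h : R) (g : R -> R) (m : R) :
  0 <= h -> is_inf_on (fun k => h < k) g m ->
  is_inf_on (fun k => sqrt h < k) (fun k => g (k ^ 2)) m.
Proof.
  intros Hh. apply is_inf_on_comp.
  - exact (pow2_gt_of_sqrt_lt h).
  - intros y Hy. exists (sqrt y). split.
    + apply sqrt_lt_1; lra.
    + rewrite <- Rsqr_pow2. apply Rsqr_sqrt. lra.
Qed.

Lemma Derive_comp_pow2 (g : R -> R) (k : R) :
  ex_derive g (k ^ 2) ->
  Derive (fun x => g (x ^ 2)) k = 2 * k * Derive g (k ^ 2).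
Proof.
  intros Hg. apply is_derive_unique.
  apply (is_derive_comp g (fun x => x ^ 2)).
  - now apply Derive_correct.
  - auto_derive; auto. ring.
Qed.

Lemma ex_derive_continuity_pt (g : R -> R) (x : R) :
  ex_derive g x -> continuity_pt g x.
Proof.
  intros Hg. apply continuity_pt_filterlim.
  exact (ex_derive_continuous (K := R_AbsRing) (V := R_NormedModule) g x Hg).
Qed.

Lemma le_affine_of_Derive_le (g : R -> R) (x0 x M : R) :
  x0 <= x ->
  (forall y, x0 <= y <= x -> ex_derive g y) ->
  (forall y, x0 <= y <= x -> Derive g y <= M) ->
  g x <= g x0 + M * (x - x0).
Proof.
  intros Hx Hder HM.
  destruct (MVT_gen g x0 x (Derive g)) as (c & Hc & Hmvt);
    rewrite ?Rmin_left, ?Rmax_right in * by lra.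
  - intros y Hy. apply Derive_correct, Hder. lra.
  - intros y Hy. now apply ex_derive_continuity_pt, Hder.
  - specialize (HM c Hc). nra.
Qed.

Lemma affine_bound_of_Derive_bounded (g : R -> R) (x0 K M : R) :
  (forall x, x0 <= x -> ex_derive g x) ->
  (forall x, K < x -> Derive g x <= M) ->
  exists B N, 0 <= N /\ forall x, x0 <= x -> g x <= B + N * (x - x0).
Proof.
  intros Hder HM.
  set (x1 := Rmax K x0 + 1).
  assert (Hx1 : K < x1 /\ x0 < x1)
    by (unfold x1; pose proof (Rmax_l K x0); pose proof (Rmax_r K x0); lra).
  destruct (continuity_ab_maj g x0 x1) as (xm & Hxm & _); [lra| |].
  { intros y Hy. apply ex_derive_continuity_pt, Hder. lra. }
  exists (g xm), (Rmax M 0). pose proof (Rmax_l M 0). pose proof (Rmax_r M 0).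
  split; [lra|]. intros x Hx.
  destruct (Rle_or_lt x x1) as [Hle | Hgt].
  - assert (g x <= g xm) by (apply Hxm; lra). nra.
  - assert (g x <= g x1 + M * (x - x1)).
    { apply le_affine_of_Derive_le; [lra| |].
      - intros y Hy. apply Hder. lra.
      - intros y Hy. apply HM. lra. }
    assert (g x1 <= g xm) by (apply Hxm; lra). nra.
Qed.

Lemma PL_of_saturated_PL_pow2 (a b C N e k u d : R) :
  0 < a -> 0 < b -> 0 < C -> 0 <= N -> 0 < e <= k -> 0 <= u ->
  b + u <= C + N * (k ^ 2 - e ^ 2) ->
  Rabs d >= sqrt (a * u / (b + u)) ->
  Rabs (2 * k * d) >= sqrt (4 * a * e ^ 2 / (C + N * e ^ 2) * u).
Proof.
  intros Ha Hb HC HN He Hu Hsat Hd.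
  set (mu := 4 * a * e ^ 2 / (C + N * e ^ 2)).
  assert (He2 : 0 < e ^ 2) by (apply pow_lt; lra).
  assert (Hden : 0 < C + N * e ^ 2) by nra.
  assert (Hmu : 0 < mu) by (apply Rdiv_lt_0_compat; nra).
  assert (Hmu_sat : mu * (b + u) <= 4 * a * k ^ 2).
  { apply Rle_trans with (mu * (C + N * (k ^ 2 - e ^ 2))); [nra|].
    unfold mu.
    replace (4 * a * e ^ 2 / (C + N * e ^ 2) * (C + N * (k ^ 2 - e ^ 2)))
      with (4 * a * (e ^ 2 * (C + N * (k ^ 2 - e ^ 2))) / (C + N * e ^ 2))
      by (field; lra).
    apply Rle_div_l; [exact Hden|].
    assert (Hek : e ^ 2 <= k ^ 2) by (apply pow_incr; lra).
    assert (Hkey : e ^ 2 * (C + N * (k ^ 2 - e ^ 2)) <= k ^ 2 * (C + N * e ^ 2)).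
    { assert (0 <= (k ^ 2 - e ^ 2) * C) by (apply Rmult_le_pos; lra).
      assert (0 <= N * e ^ 2 * e ^ 2) by (apply Rmult_le_pos; nra).
      nra. }
    replace (4 * a * k ^ 2 * (C + N * e ^ 2)) with (4 * a * (k ^ 2 * (C + N * e ^ 2)))
      by ring.
    apply Rmult_le_compat_l; lra. }
  assert (Hmu_u : mu * u <= (2 * k) ^ 2 * (a * u / (b + u))).
  { replace ((2 * k) ^ 2 * (a * u / (b + u))) with (4 * a * k ^ 2 * u / (b + u))
      by (field; lra).
    apply (Rle_div_r (mu * u)); [lra|].
    replace (mu * u * (b + u)) with (mu * (b + u) * u) by ring.
    apply Rmult_le_compat_r; lra. }
  apply Rle_ge. rewrite Rabs_mult, (Rabs_pos_eq (2 * k)) by lra.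
  apply Rle_trans with (sqrt ((2 * k) ^ 2 * (a * u / (b + u)))).
  - now apply sqrt_le_1_alt.
  - rewrite sqrt_mult_alt, sqrt_pow2 by nra.
    apply Rmult_le_compat_l; [lra|]. now apply Rge_le.
Qed.

Theorem theorem1 (h : R) (L : R -> R) (Linf finf a b : R) :
  0 < h ->
  real_analytic_on_gt h L ->
  (exists m, forall k, h < k -> m <= L k) ->
  proper_on_gt h L ->
  is_inf_on (fun k => h < k) L Linf ->
  limsup_pinfty_finite (fun k => Derive L k) ->
  0 < a -> 0 < b ->
  (forall k, h < k ->
     Rabs (Derive L k) >= sqrt (a * (L k - Linf) / (b + (L k - Linf)))) ->
  is_inf_on (fun k => sqrt h < k) (fun k => L (k ^ 2)) finf ->
  forall eps, sqrt h < eps ->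
    exists mu, 0 < mu /\
      forall k, eps <= k ->
        Rabs (Derive (fun x => L (x ^ 2)) k) >= sqrt (mu * (L (k ^ 2) - finf)).
Proof.
  intros Hh Han _ _ HLinf Hlimsup Ha Hb HPL Hfinf eps Heps.
  pose proof (real_analytic_on_gt_ex_derive h L Han) as Hder.
  assert (Hf : finf = Linf).
  { apply (is_inf_on_unique _ _ _ _ Hfinf). apply is_inf_on_pow2; [lra | exact HLinf]. }
  subst finf.
  destruct Hlimsup as [(M & K & HM) _].
  assert (He : h < eps ^ 2) by now apply pow2_gt_of_sqrt_lt.
  destruct (affine_bound_of_Derive_bounded L (eps ^ 2) K M) as (B & N & HN & HB);
    [intros x Hx; apply Hder; lra | exact HM |].
  assert (He0 : 0 < eps) by (pose proof (sqrt_pos h); lra).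
  set (C := b + Rabs (B - Linf)).
  assert (HC : 0 < C) by (unfold C; pose proof (Rabs_pos (B - Linf)); lra).
  exists (4 * a * eps ^ 2 / (C + N * eps ^ 2)).
  split; [apply Rdiv_lt_0_compat; nra|].
  intros k Hk.
  assert (Hkh : h < k ^ 2) by (apply pow2_gt_of_sqrt_lt; lra).
  rewrite (Derive_comp_pow2 L k (Hder _ Hkh)).
  apply (PL_of_saturated_PL_pow2 a b C N eps k); try lra.
  - pose proof (proj1 HLinf _ Hkh). lra.
  - assert (HLk : L (k ^ 2) <= B + N * (k ^ 2 - eps ^ 2)) by (apply HB; nra).
    unfold C. pose proof (Rle_abs (B - Linf)). lra.
  - exact (HPL _ Hkh).
Qed.
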